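(* Let $Y$ be a $\mathbb{Q}$-vector space, let $f:\mathbb{R}\to Y$, let $s\ge 1$, and let $I_k=(a_k,b_k)$, $k=1,\dots,s$, be nonempty open intervals of $\mathbb{R}$. If $\Delta_{h_1h_2\cdots h_s}f(x)=0$ for all $x\in\mathbb{R}$ and all $h_k\in I_k$, $k=1,\dots,s$, then $\Delta_{h_1h_2\cdots h_s}f(x)=0$ for all $(x,h_1,\dots,h_s)\in\mathbb{R}^{s+1}$.
   Context: For $f:X\to Y$ between $\mathbb{Q}$-vector spaces and $h\in X$, $\Delta_hf(x)=f(x+h)-f(x)$, and iterated differences are defined recursively by $\Delta_{h_1h_2\cdots h_s}f(x)=\Delta_{h_1}\left(\Delta_{h_2\cdots h_s}f\right)(x)$ for $s\ge 2$. *)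

From HB Require Import structures.
From mathcomp Require Import all_boot all_order all_algebra.
From Stdlib Require Import Reals.
Set Implicit Arguments. Unset Strict Implicit. Unset Printing Implicit Defensive.
Import GRing.Theory.

(* Real numbers: Stdlib reals (only their additive structure is used).
   Y: a Q-vector space = MathComp lmodType over rat. *)
Definition Rr := Rdefinitions.R.

Definition delta (Y : lmodType rat) (h : Rr) (f : Rr -> Y) : Rr -> Y :=
  fun x => @GRing.add Y (f (Rdefinitions.Rplus x h)) (@GRing.opp Y (f x)).

Fixpoint deltas (Y : lmodType rat) (hs : seq Rr) (f : Rr -> Y) : Rr -> Y :=
  match hs with
  | [::] => f
  | h :: hs' => delta h (deltas hs' f)
  end.

From HB Require Import structures.
From mathcomp Require Import all_boot all_order all_algebra.
From Stdlib Require Import Reals.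
From Stdlib Require Import Lra.
Import GRing.Theory.

(* Fix all increments but one, say h, and consider the set of
   values of h for which the iterated difference vanishes identically in x.
   Because Δ is additive and commutes with translations, the cocycle identity
   Δ_{d1+d2} g (x) = Δ_{d1} g (x + d2) + Δ_{d2} g (x) and its analogue for -d
   show that this set is an additive subgroup of R.  An additive subgroup of R
   containing a nonempty open interval is R itself: it contains every small
   positive number (a difference of two points of the interval), hence every
   positive number by the Archimedean property.  The theorem then follows by
   freeing the increments one at a time: an induction over the list of indices
   still constrained to their intervals, carrying along the increments already
   freed as an outer difference operator. *)

Lemma subgroup_interval_full (P : R -> Prop) (a b : R) :
  (forall x y, P x -> P y -> P (x + y)%R) -> (forall x, P x -> P (- x)%R) ->
  (a < b)%R -> (forall d, (a < d < b)%R -> P d) -> forall d, P d.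
Proof.
move=> Padd Popp hab Pab.
have Psmall t : (0 < t < b - a)%R -> P t.
  move=> ht; pose k := ((a + b - t) / 2)%R.
  have -> : t = (k + t + - k)%R by lra.
  by apply: Padd; [apply: Pab | apply/Popp/Pab]; rewrite /k; lra.
have Pnat t : P t -> forall n, P (INR n * t)%R.
  move=> Pt; elim=> [|n IH].
    have -> : (INR 0 * t = t + - t)%R by simpl; lra.
    exact/Padd/Popp.
  have -> : (INR n.+1 * t = INR n * t + t)%R by rewrite S_INR; lra.
  exact: Padd.
have Ppos d : (0 < d)%R -> P d.
  move=> hd; have ratio_pos : (0 < (b - a) / d)%R by apply: Rdiv_lt_0_compat; lra.
  have [N [hN N_gt0]] := archimed_cor1 _ ratio_pos.
  have hNpos : (0 < INR N)%R by apply: lt_0_INR.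
  have -> : d = (INR N * (d / INR N))%R by field; lra.
  apply/Pnat/Psmall; split; first by apply: Rdiv_lt_0_compat.
  have : (d * / INR N < d * ((b - a) / d))%R by apply: Rmult_lt_compat_l.
  have -> : (d * ((b - a) / d) = b - a)%R by field; lra.
  by rewrite /Rdiv.
move=> d; case: (Rtotal_order d 0) => [hd|[->|hd]]; last exact: Ppos.
- have -> : d = (- - d)%R by lra.
  by apply/Popp/Ppos; lra.
- have -> : 0%R = (1 + - (1))%R by lra.
  by apply: Padd; [|apply: Popp]; apply: Ppos; lra.
Qed.

Section IteratedDifferences.
Variable Y : lmodType rat.
Local Open Scope ring_scope.

Lemma deltas_ext (hs : seq Rr) (g1 g2 : Rr -> Y) :
  g1 =1 g2 -> deltas hs g1 =1 deltas hs g2.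
Proof. by move=> eq_g; elim: hs => [|h hs IH] x //=; rewrite /delta !IH. Qed.

Lemma deltasD (hs : seq Rr) (g1 g2 : Rr -> Y) x :
  deltas hs (fun y => g1 y + g2 y) x = deltas hs g1 x + deltas hs g2 x.
Proof. by elim: hs x => [|h hs IH] x //=; rewrite /delta !IH opprD addrACA. Qed.

Lemma deltasN (hs : seq Rr) (g : Rr -> Y) x :
  deltas hs (fun y => - g y) x = - deltas hs g x.
Proof. by elim: hs x => [|h hs IH] x //=; rewrite /delta !IH opprD. Qed.

Lemma deltas_shift (hs : seq Rr) (g : Rr -> Y) c x :
  deltas hs (fun y => g (y + c)%R) x = deltas hs g (x + c)%R.
Proof.
elim: hs x => [|h hs IH] x //=; rewrite /delta !IH.
by have -> : (x + c + h = x + h + c)%R by lra.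
Qed.

Lemma deltas_cat (hs1 hs2 : seq Rr) (g : Rr -> Y) :
  deltas (hs1 ++ hs2) g = deltas hs1 (deltas hs2 g).
Proof. by elim: hs1 => //= h hs1 ->. Qed.

Definition annihilating (hs : seq Rr) (g : Rr -> Y) (d : Rr) : Prop :=
  forall x, deltas hs (delta d g) x = 0.

(* Cocycle identity Δ_{d1+d2} g (x) = Δ_{d1} g (x + d2) + Δ_{d2} g (x). *)
Lemma annihilatingD hs g d1 d2 :
  annihilating hs g d1 -> annihilating hs g d2 -> annihilating hs g (d1 + d2)%R.
Proof.
move=> Z1 Z2 x.
rewrite (@deltas_ext hs _ (fun y => delta d1 g (y + d2)%R + delta d2 g y)).
  by rewrite deltasD deltas_shift Z1 Z2 addr0.
move=> y; rewrite /delta.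
have -> : (y + (d1 + d2) = y + d2 + d1)%R by lra.
by rewrite addrA subrK.
Qed.

(* Δ_{-d} g (x) = - Δ_d g (x - d). *)
Lemma annihilatingN hs g d : annihilating hs g d -> annihilating hs g (- d)%R.
Proof.
move=> Zd x.
rewrite (@deltas_ext hs _ (fun y => - delta d g (y + - d)%R)).
  by rewrite deltasN deltas_shift Zd oppr0.
move=> y; rewrite /delta.
have -> : (y + - d + d = y)%R by lra.
by rewrite opprB.
Qed.

Lemma annihilating_interval hs g (a b : Rr) : (a < b)%R ->
  (forall d, (a < d < b)%R -> annihilating hs g d) -> forall d, annihilating hs g d.
Proof.
move=> hab; apply: subgroup_interval_full hab.
- exact: annihilatingD.
- exact: annihilatingN.
Qed.

(* Induction on the increments still confined to their intervals: [ks] lists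
   their indices, [hs] the increments already freed. *)
Lemma deltas_free_increments (s : nat) (f : Rr -> Y) (a b : 'I_s -> Rr)
    (hab : forall k, (a k < b k)%R) (ks : seq 'I_s) : uniq ks ->
  forall hs : seq Rr,
  (forall h : 'I_s -> Rr, (forall k, k \in ks -> (a k < h k < b k)%R) ->
     forall x, deltas hs (deltas (map h ks) f) x = 0) ->
  forall h x, deltas hs (deltas (map h ks) f) x = 0.
Proof.
elim: ks => [_ hs vanish h|k ks IH /andP [k_notin uniq_ks] hs vanish h x] /=.
  by apply: (vanish h) => k; rewrite in_nil.
pose set_k (h : 'I_s -> Rr) d j := if j == k then d else h j.
have set_k_ks h' d : map (set_k h' d) ks = map h' ks.
  apply/eq_in_map => j j_in; rewrite /set_k; case: eqP => // ejk.
  by rewrite -ejk j_in in k_notin.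
have step d : (a k < d < b k)%R -> annihilating hs (deltas (map h ks) f) d.
  move=> hd y; rewrite -(deltas_cat hs [:: d]).
  apply: IH => // h' h'_ok z; rewrite deltas_cat -(set_k_ks h' d).
  have set_k_k : set_k h' d k = d by rewrite /set_k eqxx.
  have /= := vanish (set_k h' d); rewrite set_k_k; apply=> j.
  by rewrite in_cons /set_k; case: eqP => [-> //|_] /=; exact: h'_ok.
exact: (@annihilating_interval hs _ _ _ (hab k) step (h k) x).
Qed.

End IteratedDifferences.

Theorem theorem2 (Y : lmodType rat) (f : Rr -> Y) (s : nat) (hs : (1 <= s)%N)
  (a b : 'I_s -> Rr) (hab : forall k, Rdefinitions.Rlt (a k) (b k))
  (hyp : forall (x : Rr) (h : 'I_s -> Rr),
     (forall k, Rdefinitions.Rlt (a k) (h k) /\ Rdefinitions.Rlt (h k) (b k)) ->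
     deltas [seq h k | k <- enum 'I_s] f x = (GRing.zero : Y)) :
  forall (x : Rr) (h : 'I_s -> Rr), deltas [seq h k | k <- enum 'I_s] f x = (GRing.zero : Y).
Proof.
move=> x h.
apply: (@deltas_free_increments Y s f a b hab _ (enum_uniq 'I_s) [::]) => h' h'_ok y /=.
by apply: hyp => k; apply: h'_ok; rewrite mem_enum.
Qed.
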